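(* Under the standing assumptions, suppose the map $\gamma:H\mapsto\bigoplus_{h\in H}J_h$, defined on the set of subgroupoids of $\mathcal G$, is injective. Then for every wide subgroupoid $H$ of $\mathcal G$ there is no subgroupoid $H'$ of $\mathcal G$ with $\mathcal S_H\subseteq H'\subseteq H$ and $H'\neq H$, where $\mathcal S_H=\{h\in H: J_h\neq\{0\}\}$.
   Context: All rings and algebras are associative and unital. A groupoid is a nonempty set $\mathcal G$ with a partially defined associative multiplication in which every $g$ has an inverse $g^{-1}$, a left identity $r(g)=gg^{-1}$ and a right identity $d(g)=g^{-1}g$; $gh$ is defined iff $d(g)=r(h)$; $\mathcal G_0$ is the set of identities. A subgroupoid is a nonempty subset closed under inverses and defined products; it is wide if it contains $\mathcal G_0$. Standing assumptions: $K$ commutative ring, $R$ a $K$-algebra, $\mathcal G$ a finite groupoid, $\beta=(\{E_g\},\{\beta_g\})$ a unital action of $\mathcal G$ on $R$: $E_g=E_{r(g)}$ is an ideal of $R$, unital with identity $1_g$ (so $1_{g^{-1}}=1_{d(g)}$), $\beta_g:E_{g^{-1}}\to E_g$ a $K$-algebra isomorphism, $\beta_e=\mathrm{id}_{E_e}$ for $e\in\mathcal G_0$, $\beta_g\beta_h(x)=\beta_{gh}(x)$ whenever $d(g)=r(h)$, $x\in E_{h^{-1}}$; $R=\bigoplus_{e\in\mathcal G_0}E_e$; and $R$ is a $\beta$-Galois extension of $R^\beta$: there exist $x_i,y_i\in R$ ($1\le i\le m$) with $\sum_i x_i\beta_g(y_i1_{g^{-1}})=1_g$ if $g\in\mathcal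 G_0$ and $=0$ otherwise. For $g\in\mathcal G$, $J_g=\{r\in E_g: r\beta_g(x1_{g^{-1}})=xr\ \forall x\in R\}$. *)

From HB Require Import structures.
From mathcomp Require Import all_boot all_algebra.
Set Implicit Arguments. Unset Strict Implicit. Unset Printing Implicit Defensive.
Import GRing.Theory.
Local Open Scope ring_scope.

(** * Finite groupoids
   A groupoid on the finite carrier [G] is given by a multiplication [mul]
   (only meaningful on composable pairs, i.e. when [gd g = gr h]) and an
   inversion [inv].  [gr g = g g^{-1}] and [gd g = g^{-1} g]. *)
Section Groupoid.
Variables (G : finType) (mul : G -> G -> G) (inv : G -> G).

Definition gr (g : G) : G := mul g (inv g).
Definition gd (g : G) : G := mul (inv g) g.

Definition is_groupoid : Prop :=
  (0 < #|G|)%N /\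
  [/\
      (forall g h, gd g = gr h -> gd (mul g h) = gd h /\ gr (mul g h) = gr g),
      (forall g h k, gd g = gr h -> gd h = gr k ->
          mul (mul g h) k = mul g (mul h k)),
      (forall g, gd (gr g) = gr g /\ mul (gr g) g = g),
      (forall g, gr (gd g) = gd g /\ mul g (gd g) = g) &
      (forall g, gd (inv g) = gr g /\ gr (inv g) = gd g)].

Definition G0 : {set G} := [set gr g | g : G].

Definition subgroupoid (H : {set G}) : Prop :=
  [/\ H != set0,
      (forall h, h \in H -> inv h \in H) &
      (forall g h, g \in H -> h \in H -> gd g = gr h -> mul g h \in H)].

Definition wide (H : {set G}) : Prop := G0 \subset H.

End Groupoid.

Section Action.
Variables (K : comPzRingType) (R : algType K).
Variables (G : finType) (mul : G -> G -> G) (inv : G -> G).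
Variables (E : G -> R -> Prop) (one : G -> R) (beta : G -> R -> R).

Definition is_ideal (I : R -> Prop) : Prop :=
  [/\ I 0,
      (forall x y, I x -> I y -> I (x + y)),
      (forall x, I x -> I (- x)),
      (forall a x, I x -> I (a * x)) &
      (forall a x, I x -> I (x * a))].

Definition alg_iso_on (g : G) : Prop :=
  (forall x, E (inv g) x -> E g (beta g x)) /\
  [/\ 
      (forall x y, E (inv g) x -> E (inv g) y -> beta g (x + y) = beta g x + beta g y),
      (forall x y, E (inv g) x -> E (inv g) y -> beta g (x * y) = beta g x * beta g y),
      (forall (k : K) x, E (inv g) x -> beta g (k *: x) = k *: beta g x),
      (forall x y, E (inv g) x -> E (inv g) y -> beta g x = beta g y -> x = y) &
      (forall y, E g y -> exists2 x, E (inv g) x & beta g x = y)].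

Definition unital_action : Prop :=
  (forall g x, E g x <-> E (gr mul inv g) x) /\
  (forall g, is_ideal (E g)) /\
  [/\ (forall g, E g (one g) /\ (forall x, E g x -> one g * x = x /\ x * one g = x)),
      (forall g, alg_iso_on g),
      (forall e x, e \in G0 mul inv -> E e x -> beta e x = x),
      (forall g h x, gd mul inv g = gr mul inv h -> E (inv h) x ->
          beta g (beta h x) = beta (mul g h) x) &
      (* R = \bigoplus_{e in G_0} E_e (internal direct sum) *)
      ((forall x, exists f : G -> R,
          (forall e, e \in G0 mul inv -> E e (f e)) /\
          x = \sum_(e in G0 mul inv) f e) /\
       (forall f : G -> R, (forall e, e \in G0 mul inv -> E e (f e)) ->
          \sum_(e in G0 mul inv) f e = 0 -> forall e, e \in G0 mul inv -> f e = 0))].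

Definition galois_ext : Prop :=
  exists (m : nat) (x y : 'I_m -> R), forall g : G,
    \sum_(i < m) x i * beta g (y i * one (inv g)) =
      if g \in G0 mul inv then one g else 0.

Definition J (g : G) (r : R) : Prop :=
  E g r /\ forall x : R, r * beta g (x * one (inv g)) = x * r.

(** gamma(H) = \bigoplus_{h in H} J_h, seen inside the skew groupoid ring
    (elements \sum_g a_g delta_g are represented by their coefficient
    functions a : G -> R). *)
Definition gamma (H : {set G}) (a : G -> R) : Prop :=
  forall g, (g \in H -> J g (a g)) /\ (g \notin H -> a g = 0).

Definition S_ (H : {set G}) (h : G) : Prop :=
  h \in H /\ exists r, J h r /\ r <> 0.

End Action.

From HB Require Import structures.
From mathcomp Require Import all_boot all_algebra.
Set Implicit Arguments. Unset Strict Implicit.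
Import GRing.Theory.
Local Open Scope ring_scope.

(** The point is that gamma(H) only "sees" the components J_h that are
    nonzero: an element a of gamma(H) vanishes at every h with J_h = {0},
    i.e. outside S_H, and conversely 0 lies in every J_h.  Hence whenever
    S_H <= H' <= H, the sets gamma(H') and gamma(H) coincide
    ([gamma_between]), and injectivity of gamma forces H' = H. *)

Section GammaSupport.

Variables (K : comPzRingType) (R : algType K) (G : finType).
Variables (inv : G -> G) (E : G -> R -> Prop) (one : G -> R).
Variable (beta : G -> R -> R).

(** Shrinking H to any H' containing S_H preserves membership in gamma: a
    coefficient at h in H \ H' lies in J_h, which is {0} since h is not in
    S_H. *)
Lemma gamma_sup (H' H : {set G}) (a : G -> R) :
  H' \subset H -> (forall h, S_ inv E one beta H h -> h \in H') ->
  gamma inv E one beta H a -> gamma inv E one beta H' a.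
Proof.
move=> subH'H SH_H' Ha g; have [J_a zero_a] := Ha g; split=> [gH' | gNH'].
  exact/J_a/(subsetP subH'H).
have [gH | /zero_a //] := boolP (g \in H).
have [// | nz_a] := eqVneq (a g) 0.
case/negP: gNH'; apply: SH_H'; split=> //.
by exists (a g); split; [apply: J_a | apply/eqP].
Qed.

Hypothesis E0 : forall g, E g 0.

Lemma J_zero (g : G) : J inv E one beta g 0.
Proof. by split=> [|x]; rewrite ?mul0r ?mulr0. Qed.

(** Enlarging H' to H preserves membership in gamma: the new coefficients
    are 0, which lies in J_h. *)
Lemma gamma_sub (H' H : {set G}) (a : G -> R) :
  H' \subset H -> gamma inv E one beta H' a -> gamma inv E one beta H a.
Proof.
move=> subH'H Ha g; have [J_a zero_a] := Ha g; split=> [gH | gNH].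
  by have [/J_a // | /zero_a ->] := boolP (g \in H'); apply: J_zero.
by apply: zero_a; apply: contra gNH; apply: (subsetP subH'H).
Qed.

Lemma gamma_between (H' H : {set G}) :
  H' \subset H -> (forall h, S_ inv E one beta H h -> h \in H') ->
  forall a, gamma inv E one beta H' a <-> gamma inv E one beta H a.
Proof.
by move=> subH'H SH_H' a; split; [apply: gamma_sub | apply: gamma_sup].
Qed.

End GammaSupport.

Lemma unital_action_E0 (K : comPzRingType) (R : algType K) (G : finType)
    (mul : G -> G -> G) (inv : G -> G)
    (E : G -> R -> Prop) (one : G -> R) (beta : G -> R -> R) :
  unital_action mul inv E one beta -> forall g, E g 0.
Proof. by case=> _ [ideal_E _] g; case: (ideal_E g). Qed.

Theorem lemma3p8 (K : comPzRingType) (R : algType K) (G : finType)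
  (mul : G -> G -> G) (inv : G -> G)
  (E : G -> R -> Prop) (one : G -> R) (beta : G -> R -> R)
  (HG : is_groupoid mul inv)
  (Hact : unital_action mul inv E one beta)
  (Hgal : galois_ext mul inv one beta)
  (Hinj : forall H1 H2 : {set G},
      subgroupoid mul inv H1 -> subgroupoid mul inv H2 ->
      (forall a : G -> R, gamma inv E one beta H1 a <-> gamma inv E one beta H2 a) ->
      H1 = H2) :
  forall H : {set G}, subgroupoid mul inv H -> wide mul inv H ->
    ~ exists H' : {set G},
        [/\ subgroupoid mul inv H',
            (forall h, S_ inv E one beta H h -> h \in H'),
            H' \subset H &
            H' != H].
Proof.
move=> H sub_H _ [H' [sub_H' SH_H' subH'H /eqP neqH'H]].
apply: neqH'H; apply: Hinj => //.
exact: (gamma_between (unital_action_E0 Hact) subH'H SH_H').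
Qed.
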